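(* Let $S$ be a local ring, let $a_1,\ldots,a_d$ be a regular sequence in $S$, and let $J=(a_1,\ldots,a_d)$. Let $L$ be an $S$-module of finite length with $J\subseteq \operatorname{ann} L$. Then for every integer $n\geq 1$, $$\lambda\big(\operatorname{Tor}_1^S(L,S/J^n)\big)=\binom{n+d-1}{d-1}\lambda(L).$$
   Context: $\lambda(M)$ denotes the length of an $S$-module $M$. *)

From HB Require Import structures.
From mathcomp Require Import all_boot all_order all_algebra.
From Stdlib Require List.
Set Implicit Arguments. Unset Strict Implicit. Unset Printing Implicit Defensive.
Import Order.TTheory GRing.Theory.
Local Open Scope ring_scope.

Section CommAlg.
Variable S : comNzRingType.

Definition is_ideal (P : S -> Prop) : Prop :=
  P 0 /\ (forall x y, P x -> P y -> P (x + y)) /\ (forall r x, P x -> P (r * x)).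

Definition is_maximal_ideal (M : S -> Prop) : Prop :=
  is_ideal M /\ ~ M 1 /\
  (forall N : S -> Prop, is_ideal N -> ~ N 1 -> (forall x, M x -> N x) ->
     forall x, N x -> M x).

Definition local_ring : Prop :=
  exists M, is_maximal_ideal M /\
    forall N, is_maximal_ideal N -> forall x, N x <-> M x.

Definition ideal_of {I : Type} (Q : I -> Prop) (g : I -> S) (x : S) : Prop :=
  exists s : seq (S * I), (forall p, List.In p s -> Q p.2) /\
    x = \sum_(p <- s) p.1 * g p.2.

Definition regular_sequence (d : nat) (a : 'I_d -> S) : Prop :=
  (forall i : 'I_d, forall x : S,
     ideal_of (fun j : 'I_d => (j < i)%N) a (a i * x) ->
     ideal_of (fun j : 'I_d => (j < i)%N) a x) /\
  ~ ideal_of (fun _ => True) a 1.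

Section Modules.
Variable V : lmodType S.

Definition is_submodule (P : V -> Prop) : Prop :=
  P 0 /\ forall (r : S) x y, P x -> P y -> P (r *: x + y).

Definition strict_chain (B Z : V -> Prop) (k : nat) (c : nat -> V -> Prop) : Prop :=
  (forall i, (i <= k)%N -> is_submodule (c i)) /\
  (forall x, c 0%N x <-> B x) /\ (forall x, c k x <-> Z x) /\
  (forall i, (i < k)%N -> (forall x, c i x -> c i.+1 x) /\ exists x, c i.+1 x /\ ~ c i x).

Definition quot_length (B Z : V -> Prop) (n : nat) : Prop :=
  (exists c, strict_chain B Z n c) /\
  (forall k c, strict_chain B Z k c -> (k <= n)%N).

End Modules.

Definition module_length (L : lmodType S) (n : nat) : Prop :=
  quot_length (fun x : L => x = 0) (fun _ => True) n.

Definition annihilates (P : S -> Prop) (L : lmodType S) : Prop :=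
  forall r, P r -> forall x : L, r *: x = 0.

(* Tor_1^S(L, S/I) where I is the ideal generated by g : I -> S (I finite).
   Computed from the free presentation  F2 -> S^I -> S -> S/I -> 0
   (S^I -> S sends e_i to g i; F2 maps onto the syzygies of g):
   after tensoring with L, Tor_1 = Z / B with
     Z = { f in L^I | sum_i g i *: f i = 0 },
     B = image of L (x) Syz(g) = span { (k i *: y)_i | k syzygy, y in L }. *)
Definition tor1_cycles {I : finType} (g : I -> S) (L : lmodType S)
  (f : {ffun I -> L}) : Prop := \sum_i g i *: f i = 0.

Definition syzygy {I : finType} (g : I -> S) (k : I -> S) : Prop :=
  \sum_i k i * g i = 0.

Definition tor1_boundaries {I : finType} (g : I -> S) (L : lmodType S)
  (f : {ffun I -> L}) : Prop :=
  exists s : seq ((I -> S) * L), (forall p, List.In p s -> syzygy g p.1) /\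
    f = \sum_(p <- s) [ffun i => p.1 i *: p.2].

Definition tor1_length {I : finType} (g : I -> S) (L : lmodType S) (n : nat) : Prop :=
  quot_length (tor1_boundaries g (L := L)) (tor1_cycles g (L := L)) n.

(* the monomials of degree n in a_1..a_d: these generate J^n *)
Definition pow_gens (d n : nat) (a : 'I_d -> S) (t : n.-tuple 'I_d) : S :=
  \prod_(j <- t) a j.

End CommAlg.

(* binomial coefficient with an integer lower index, 'C(m, k) = 0 for k < 0
   (standard convention; matters only for d = 0 in binom(n+d-1, d-1)) *)
Definition binomZ (m : nat) (k : int) : nat :=
  match k with Posz k' => 'C(m, k') | Negz _ => 0%N end.

From mathcomp Require Import all_boot all_order all_algebra.
From Stdlib Require Import Classical.
Set Implicit Arguments. Unset Strict Implicit. Unset Printing Implicit Defensive.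
Import Order.TTheory GRing.Theory.
Local Open Scope ring_scope.

(* Index the generators of J^n by the words t of length n in d letters.  As J
   kills L, every vector of L^words is a cycle, and the boundaries are spanned by
   the vectors (k t *: y)_t with k a syzygy of the monomials a^t.  A regular
   sequence is quasi-regular: every homogeneous relation among the monomials of
   degree n has all its coefficients in J, i.e. J^n / J^(n+1) is free over S/J on
   the monomials.  Hence summing a vector over the words with the same multiset
   of letters identifies Tor_1 with L^M, where M is the set of multisets of size
   n, so its length is #|M| * lambda(L) = C(n+d-1, d-1) * lambda(L).
   Quasi-regularity is proved by induction on the number of letters, splitting
   off the last one and cancelling it by the non-zerodivisor hypothesis. *)

Section IdealOf.
Variables (S : comNzRingType) (I : Type) (Q : I -> Prop) (g : I -> S).
Local Notation J := (ideal_of Q g).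

Lemma ideal_of0 : J 0.
Proof. by exists [::]; split => //; rewrite big_nil. Qed.

Lemma ideal_ofD x y : J x -> J y -> J (x + y).
Proof.
move=> [s1 [H1 ->]] [s2 [H2 ->]]; exists (s1 ++ s2); split; last by rewrite big_cat.
by move=> p /(List.in_app_or s1 s2 p) [/H1|/H2].
Qed.

Lemma ideal_ofMl r x : J x -> J (r * x).
Proof.
move=> [s [Hs ->]]; exists [seq (r * p.1, p.2) | p <- s]; split.
  by move=> p /List.in_map_iff [q [<- /Hs]].
by rewrite big_map mulr_sumr; apply: eq_bigr => p _; rewrite mulrA.
Qed.

Lemma ideal_ofMr r x : J x -> J (x * r).
Proof. by rewrite mulrC; apply: ideal_ofMl. Qed.

Lemma ideal_of_gen j : Q j -> J (g j).
Proof. by move=> Qj; exists [:: (1, j)]; split => [p [<-|]|]; rewrite // big_seq1 mul1r. Qed.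

Lemma ideal_of_ind (P : S -> Prop) :
  P 0 -> (forall r j y, Q j -> P y -> P (r * g j + y)) ->
  forall x, J x -> P x.
Proof.
move=> P0 PS _ [s [Hs ->]]; elim: s Hs => [|[r j] s IH] Hs; first by rewrite big_nil.
rewrite big_cons; apply: PS; first exact: (Hs (r, j)) (or_introl _).
by apply: IH => p ps; apply: Hs; right.
Qed.

Lemma ideal_of_sum (T : eqType) (r : seq T) (P : pred T) (F : T -> S) :
  (forall i, i \in r -> P i -> J (F i)) -> J (\sum_(i <- r | P i) F i).
Proof.
move=> JF; rewrite big_seq_cond; apply: big_ind => [|x y|i /andP[]].
- exact: ideal_of0.
- exact: ideal_ofD.
- exact: JF.
Qed.

End IdealOf.

Lemma ideal_of_sub (S : comNzRingType) (I : Type) (Q Q' : I -> Prop) (g : I -> S) x :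
  (forall j, Q j -> Q' j) -> ideal_of Q g x -> ideal_of Q' g x.
Proof. by move=> QQ' [s [Hs ->]]; exists s; split => // p /Hs /QQ'. Qed.

Lemma big_group_undup (V : nmodType) (X Y : eqType) (s : seq X) (key : X -> Y)
    (F : X -> V) :
  \sum_(x <- s) F x = \sum_(y <- undup (map key s)) \sum_(x <- s | key x == y) F x.
Proof.
under [RHS]eq_bigr do rewrite big_mkcond.
rewrite exchange_big /=; apply: eq_big_seq => x xs.
rewrite (bigD1_seq (key x)) ?undup_uniq ?mem_undup ?map_f //= eqxx big1 ?addr0 //.
by move=> y /negPf; rewrite eq_sym => ->.
Qed.

Lemma sum_delta (R : pzSemiRingType) (T : finType) (t : T) (F : T -> R) :
  \sum_u (u == t)%:R * F u = F t.
Proof. by rewrite (bigD1 t) //= eqxx mul1r big1 ?addr0 // => u /negPf ->; rewrite mul0r. Qed.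

Section Forms.
Variables (S : comNzRingType) (d : nat) (a : 'I_d -> S).

Local Notation word := (seq 'I_d).
Local Notation form := (seq (S * word)).
Local Notation J k := (ideal_of (fun j : 'I_d => (j < k)%N) a).

(* A form is a formal S-combination of words in the letters 'I_d, evaluated at
   a; as S is commutative a word stands for a monomial up to rearrangement, so
   the coefficient of a monomial collects all its rearrangements.  [pow_ideal k n]
   is (J k)^n, the ideal of values of forms of degree n in the first k letters. *)
Definition monomial (w : word) : S := \prod_(j <- w) a j.
Definition eval_form (p : form) : S := \sum_(q <- p) q.1 * monomial q.2.
Definition form_coef (p : form) (m : word) : S := \sum_(q <- p | perm_eq q.2 m) q.1.
Definition homogeneous (n k : nat) (p : form) : Prop :=
  forall q, q \in p -> size q.2 = n /\ all (fun j : 'I_d => (j < k)%N) q.2.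
Definition scale_form (r : S) (p : form) : form := [seq (r * q.1, q.2) | q <- p].

Definition pow_ideal (k n : nat) (x : S) : Prop :=
  exists p, homogeneous n k p /\ x = eval_form p.

Definition quasi_regular_in_degree (k n : nat) : Prop :=
  forall p, homogeneous n k p -> eval_form p = 0 -> forall m, J k (form_coef p m).

Definition quasi_regular (k : nat) : Prop := forall n, quasi_regular_in_degree k n.

Definition nonzerodivisor_mod (k : nat) (z : S) : Prop :=
  forall y, J k (z * y) -> J k y.

Lemma eval_form_cat p1 p2 : eval_form (p1 ++ p2) = eval_form p1 + eval_form p2.
Proof. exact: big_cat. Qed.

Lemma form_coef_cat p1 p2 m : form_coef (p1 ++ p2) m = form_coef p1 m + form_coef p2 m.
Proof. exact: big_cat. Qed.

Lemma eval_form_scale r p : eval_form (scale_form r p) = r * eval_form p.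
Proof. by rewrite /eval_form big_map mulr_sumr; apply: eq_bigr => q _; rewrite mulrA. Qed.

Lemma form_coef_scale r p m : form_coef (scale_form r p) m = r * form_coef p m.
Proof. by rewrite /form_coef big_map mulr_sumr. Qed.

Lemma homogeneous_cat n k p1 p2 :
  homogeneous n k p1 -> homogeneous n k p2 -> homogeneous n k (p1 ++ p2).
Proof. by move=> H1 H2 q; rewrite mem_cat => /orP [/H1|/H2]. Qed.

Lemma homogeneous_scale n k r p : homogeneous n k p -> homogeneous n k (scale_form r p).
Proof. by move=> H q /mapP [q' /H qH ->]. Qed.

Lemma homogeneous_le n k k' p : (k <= k')%N -> homogeneous n k p -> homogeneous n k' p.
Proof.
move=> kk' H q /H [sq /allP lt_k]; split => //; apply/allP => j /lt_k jk.
exact: leq_trans jk kk'.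
Qed.

Lemma monomial_perm w w' : perm_eq w w' -> monomial w = monomial w'.
Proof. exact: perm_big. Qed.

Lemma quasi_regular_eq k n p p' : quasi_regular_in_degree k n ->
  homogeneous n k p -> homogeneous n k p' -> eval_form p = eval_form p' ->
  forall m, J k (form_coef p m - form_coef p' m).
Proof.
move=> qr hp hp' ep m; rewrite -mulN1r -form_coef_scale -form_coef_cat.
apply: qr (homogeneous_cat hp (homogeneous_scale (r := -1) hp')) _ m.
by rewrite eval_form_cat eval_form_scale ep mulN1r subrr.
Qed.

Definition absorb_head (q : S * word) : S * word :=
  if q.2 is j :: w then (q.1 * a j, w) else q.

Definition lower_form (p : form) : form := map absorb_head p.

Lemma lower_formP n k p : homogeneous n.+1 k p ->
  [/\ homogeneous n k (lower_form p), eval_form (lower_form p) = eval_form p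
    & forall m, J k (form_coef (lower_form p) m)].
Proof.
move=> hp; split.
- by move=> q /mapP [[c [|j w]] /hp [//= [sw] /andP [_ al]] ->].
- rewrite /eval_form /lower_form big_map; apply: eq_big_seq => [[c [|j w]]] /hp //= _.
  by rewrite /monomial big_cons mulrA.
- move=> m; apply: ideal_of_sum => _ /mapP [[c [|j w]] /hp [//= _ /andP [jk _]] ->] _.
  exact/ideal_ofMl/ideal_of_gen.
Qed.

Lemma pow_idealS k n x : pow_ideal k n.+1 x -> pow_ideal k n x.
Proof. by move=> [p [hp ->]]; have [hp' ep _] := lower_formP hp; exists (lower_form p). Qed.

Lemma pow_ideal_monomial k n r w :
  size w = n -> all (fun j : 'I_d => (j < k)%N) w -> pow_ideal k n (r * monomial w).
Proof.
move=> sw al; exists [:: (r, w)]; split; first by move=> q; rewrite inE => /eqP ->.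
by rewrite /eval_form big_seq1.
Qed.

Lemma pow_ideal0 k n : pow_ideal k n 0.
Proof. by exists [::]; rewrite /eval_form big_nil. Qed.

Lemma pow_idealD k n x y : pow_ideal k n x -> pow_ideal k n y -> pow_ideal k n (x + y).
Proof.
move=> [p [hp ->]] [p' [hp' ->]]; exists (p ++ p').
by rewrite eval_form_cat; split => //; apply: homogeneous_cat.
Qed.

Lemma pow_ideal_sum k n (T : eqType) (r : seq T) (P : pred T) (F : T -> S) :
  (forall i, i \in r -> P i -> pow_ideal k n (F i)) ->
  pow_ideal k n (\sum_(i <- r | P i) F i).
Proof.
move=> PF; rewrite big_seq_cond; apply: big_ind => [|x y|i /andP[]].
- exact: pow_ideal0.
- exact: pow_idealD.
- exact: PF.
Qed.

(* Grouping the words of p by their sorted rearrangement writes eval_form p as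
   a combination of the monomials with the coefficients form_coef p m. *)
Lemma pow_ideal_of_coefs n k p : homogeneous n k p ->
  (forall m, J k (form_coef p m)) -> pow_ideal k n.+1 (eval_form p).
Proof.
move=> hp Jcoef; pose key (q : S * word) := sort <=%O q.2.
have -> : eval_form p = \sum_(q <- p) q.1 * monomial (key q).
  by apply: eq_bigr => q _; congr (_ * _); apply: monomial_perm; rewrite perm_sym perm_sort.
rewrite (big_group_undup _ key); apply: pow_ideal_sum => m0.
rewrite mem_undup => /mapP [[c w] qp ->] _.
have [sw al] := hp _ qp.
have -> : \sum_(q <- p | key q == key (c, w)) q.1 * monomial (key q)
          = form_coef p w * monomial (sort <=%O w).
  rewrite /form_coef mulr_suml; apply: eq_big => [q|q /eqP ->] //.
  exact: (sameP eqP (perm_sort_leP _ _)).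
move: (form_coef p w) (Jcoef w); apply: ideal_of_ind => [|r j y jk IH].
  by rewrite mul0r; apply: pow_ideal0.
rewrite mulrDl; apply: pow_idealD => //.
have -> : r * a j * monomial (sort <=%O w) = r * monomial (j :: sort <=%O w).
  by rewrite /monomial big_cons mulrA.
apply: pow_ideal_monomial.
  by rewrite /= size_sort sw.
by rewrite /= all_sort jk.
Qed.

(* Induction on n: if z y is the value of a form K of degree n + 1 and y that of
   a form P of degree n, then z P - lower_form K is a relation of degree n, so
   z times each coefficient of P lies in J k, hence so does the coefficient. *)
Lemma pow_ideal_cancel k z : quasi_regular k -> nonzerodivisor_mod k z ->
  forall n y, pow_ideal k n (z * y) -> pow_ideal k n y.
Proof.
move=> qr nzd; elim=> [|n IH] y zy.
  by have := @pow_ideal_monomial k 0 y [::] erefl erefl; rewrite /monomial big_nil mulr1.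
have [p [hp ey]] := IH _ (pow_idealS zy).
have [q [hq ezy]] := zy.
have [hq' eq' Jq'] := lower_formP hq.
rewrite ey; apply: pow_ideal_of_coefs => // m; apply: nzd.
have := quasi_regular_eq (qr n) (homogeneous_scale (r := z) hp) hq' _ m.
rewrite form_coef_scale eval_form_scale eq' -ey -ezy => /(_ erefl) Jd.
by rewrite -(subrK (form_coef (lower_form q) m) (z * form_coef p m)); apply: ideal_ofD.
Qed.

Definition form_free_of (x : 'I_d) (p : form) : form := [seq q <- p | x \notin q.2].

Definition form_div (x : 'I_d) (p : form) : form :=
  [seq (q.1, rem x q.2) | q <- p & x \in q.2].

Lemma homogeneous_free_of n (x : 'I_d) p :
  homogeneous n x.+1 p -> homogeneous n x (form_free_of x p).
Proof.
move=> hp q; rewrite mem_filter => /andP [xq /hp [sq /allP al]]; split => //.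
apply/allP => j jq; have := al j jq; rewrite ltnS leq_eqVlt => /orP [/eqP/val_inj ejx|//].
by move: xq; rewrite -ejx jq.
Qed.

Lemma homogeneous_div n k x p : homogeneous n.+1 k p -> homogeneous n k (form_div x p).
Proof.
move=> hp q /mapP [q']; rewrite mem_filter => /andP [xq /hp [sq al]] -> /=.
split; first by rewrite size_rem // sq.
by apply/allP => j /mem_rem /(allP al).
Qed.

Lemma eval_form_split x p :
  eval_form p = eval_form (form_free_of x p) + a x * eval_form (form_div x p).
Proof.
rewrite /eval_form (bigID (fun q => x \in q.2)) /= addrC big_filter; congr (_ + _).
rewrite big_map big_filter mulr_sumr; apply: eq_bigr => q xq /=.
by rewrite (monomial_perm (perm_to_rem xq)) /monomial big_cons mulrCA.
Qed.

Lemma form_coef_split x p m : form_coef p m =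
  if x \in m then form_coef (form_div x p) (rem x m) else form_coef (form_free_of x p) m.
Proof.
case: ifP => xm.
  rewrite /form_coef big_map big_filter_cond /=; apply: eq_bigl => q.
  case xq: (x \in q.2); last first.
    by apply/negbTE/negP => /perm_mem /(_ x); rewrite xq xm.
  by rewrite /= (permPl (perm_to_rem xq)) (permPr (perm_to_rem xm)) perm_cons.
rewrite /form_coef big_filter_cond; apply: eq_bigl => q.
case pq: (perm_eq q.2 m); rewrite ?andbF ?andbT //.
by rewrite (perm_mem pq) xm.
Qed.

Lemma quasi_regular_in_degree0 k : quasi_regular_in_degree k 0.
Proof.
move=> p hp ep m; have w0 q : q \in p -> q.2 = [::] by move=> /hp [/size0nil].
suff -> : form_coef p m = if perm_eq [::] m then eval_form p else 0.
  by rewrite ep if_same; apply: ideal_of0.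
rewrite /form_coef /eval_form; case: ifP => m0.
  rewrite big_seq_cond [RHS]big_seq; apply: eq_big => [q|q /andP [qp _]].
    by case qp: (q \in p) => //=; rewrite w0.
  by rewrite w0 // /monomial big_nil mulr1.
by rewrite big_seq_cond big_pred0 // => q; case qp: (q \in p); rewrite //= w0.
Qed.

Lemma quasi_regular0 : quasi_regular 0.
Proof.
case; first exact: quasi_regular_in_degree0.
move=> n p hp _ m; rewrite /form_coef big_seq_cond big_pred0; first exact: ideal_of0.
by move=> q; case qp: (q \in p) => //=; have [] := hp q qp; case: q.2.
Qed.

(* Write p = G + a_x H with G free of the letter x.  Then a_x H(a) lies in
   (J x)^(n+1), so H(a) = P(a) for a form P of degree n + 1 in the letters < x;
   the relations G = -a_x P (in the letters < x) and H = lower_form P (in degree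
   n) put the coefficients of G and H, hence those of p, in J x.+1. *)
Lemma quasi_regular_step (x : 'I_d) :
  quasi_regular x -> nonzerodivisor_mod x (a x) -> quasi_regular x.+1.
Proof.
move=> qr nzd; elim=> [|n IH]; first exact: quasi_regular_in_degree0.
move=> p hp ep m; set G := form_free_of x p; set H := form_div x p.
have hG : homogeneous n.+1 x G by apply: homogeneous_free_of.
have hH : homogeneous n x.+1 H by apply: homogeneous_div.
have eGH : a x * eval_form H = - eval_form G.
  by apply/eqP; rewrite -addr_eq0 addrC -eval_form_split ep.
have [P [hP eP]] : pow_ideal x n.+1 (eval_form H).
  apply: (pow_ideal_cancel qr nzd); rewrite eGH -mulN1r -eval_form_scale.
  by exists (scale_form (-1) G); split => //; apply: homogeneous_scale.
have ltx : forall j : 'I_d, (j < x)%N -> (j < x.+1)%N by move=> j /ltnW.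
have JG m' : J x.+1 (form_coef G m').
  have := quasi_regular_eq (qr _) hG (homogeneous_scale (r := - a x) hP) _ m'.
  rewrite eval_form_scale -eP mulNr eGH opprK form_coef_scale => /(_ erefl).
  move=> /(ideal_of_sub ltx) JGP; rewrite -(subrK (- a x * form_coef P m') (form_coef G m')).
  apply: ideal_ofD JGP _; apply: ideal_ofMr; rewrite -mulN1r.
  exact/ideal_ofMl/ideal_of_gen.
have [hP' eP' JP'] := lower_formP hP.
have JH m' : J x.+1 (form_coef H m').
  have := quasi_regular_eq IH hH (homogeneous_le (leqnSn x) hP') _ m'.
  rewrite eP' -eP => /(_ erefl) JHP.
  rewrite -(subrK (form_coef (lower_form P) m') (form_coef H m')).
  by apply: ideal_ofD JHP (ideal_of_sub ltx (JP' m')).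
by rewrite (form_coef_split x); case: ifP.
Qed.

Lemma regular_quasi_regular :
  (forall i : 'I_d, nonzerodivisor_mod i (a i)) -> quasi_regular d.
Proof.
move=> nzd; suff qr k : (k <= d)%N -> quasi_regular k by exact: qr.
elim: k => [_|k IH kd]; first exact: quasi_regular0.
exact: (quasi_regular_step (x := Ordinal kd)) (IH (ltnW kd)) (nzd _).
Qed.

End Forms.

Section Length.
Variables (S : comNzRingType) (V : lmodType S).
Implicit Types (A B C X Y Z : V -> Prop) (c : nat -> V -> Prop).

Lemma submoduleD X x y : is_submodule X -> X x -> X y -> X (x + y).
Proof. by move=> [_ SX] Xx Xy; rewrite -[x]scale1r; apply: SX. Qed.

Lemma submoduleZ X r x : is_submodule X -> X x -> X (r *: x).
Proof. by move=> [X0 SX] Xx; rewrite -[_ *: _]addr0; apply: SX. Qed.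

Lemma submoduleB X x y : is_submodule X -> X x -> X y -> X (x - y).
Proof. by move=> SX Xx Xy; apply: submoduleD => //; rewrite -scaleN1r; apply: submoduleZ. Qed.

Definition submodule_sum X Y (x : V) : Prop := exists u v, [/\ X u, Y v & x = u + v].

Lemma is_submodule_cap X Y :
  is_submodule X -> is_submodule Y -> is_submodule (fun x => X x /\ Y x).
Proof.
move=> [X0 SX] [Y0 SY]; split => // r x y [Xx Yx] [Xy Yy].
by split; [apply: SX | apply: SY].
Qed.

Lemma is_submodule_sum X Y :
  is_submodule X -> is_submodule Y -> is_submodule (submodule_sum X Y).
Proof.
move=> [X0 SX] [Y0 SY]; split; first by exists 0, 0; rewrite addr0.
move=> r _ _ [u [v [Xu Yv ->]]] [u' [v' [Xu' Yv' ->]]].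
exists (r *: u + u'), (r *: v + v'); split; [exact: SX | exact: SY |].
by rewrite scalerDr addrACA.
Qed.

Lemma strict_chain_le X Z k c : strict_chain X Z k c ->
  forall i j, (i <= j <= k)%N -> forall x, c i x -> c j x.
Proof.
move=> [_ [_ [_ cI]]] i j /andP [ij jk]; elim: j ij jk => [|j IH].
  by rewrite leqn0 => /eqP ->.
rewrite leq_eqVlt => /orP [/eqP -> //| ij] jk x cx.
by apply: (cI j jk).1; apply: IH => //; exact: ltnW.
Qed.

Lemma strict_chain_eq X Z X' Z' k c :
  (forall x, X x <-> X' x) -> (forall x, Z x <-> Z' x) ->
  strict_chain X Z k c -> strict_chain X' Z' k c.
Proof.
move=> EX EZ [cS [c0 [ck cI]]]; split => //; split; last split => //.
- by move=> x; rewrite c0 EX.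
- by move=> x; rewrite ck EZ.
Qed.

Lemma strict_chain_nil X X' Z' : is_submodule X ->
  (forall x, X x <-> X' x) -> (forall x, X x <-> Z' x) -> strict_chain X' Z' 0 (fun=> X).
Proof. by move=> SX EX EZ; split; [|split; [|split]]. Qed.

Lemma strict_chain_truncate X Z k c : strict_chain X Z k.+1 c -> strict_chain X (c k) k c.
Proof.
move=> [cS [c0 [_ cI]]]; split; [|split; [|split]] => // i ik.
  by apply: cS; exact: leqW.
exact: cI (ltnW ik).
Qed.

Lemma strict_chain_snoc X Z Z' k c :
  strict_chain X Z k c -> is_submodule Z' -> (forall x, Z x -> Z' x) ->
  (exists x, Z' x /\ ~ Z x) ->
  strict_chain X Z' k.+1 (fun i => if (i <= k)%N then c i else Z').
Proof.
move=> [cS [c0 [ck cI]]] SZ' ZZ' [x [Z'x nZx]]; split; [|split; [|split]].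
- by move=> i _; case: ifP => ik; [apply: cS|].
- by move=> y; rewrite leq0n c0.
- by move=> y; rewrite ltnn.
move=> i; rewrite ltnS /= => ik; rewrite ik.
case: (ltnP i k) => [ltik|kle]; first exact: cI.
have -> : i = k by apply/eqP; rewrite eqn_leq ik kle.
split; first by move=> y /ck /ZZ'.
by exists x; split => // /ck.
Qed.

Lemma strict_chain_cat A B C m k c1 c2 :
  strict_chain A B m c1 -> strict_chain B C k c2 ->
  strict_chain A C (m + k) (fun i => if (i <= m)%N then c1 i else c2 (i - m)%N).
Proof.
move=> [S1 [c10 [c1m I1]]] [S2 [c20 [c2k I2]]].
set c := fun i => _.
have Ec i : (m <= i)%N -> forall x, c i x <-> c2 (i - m)%N x.
  move=> mi x; rewrite /c; case: ifP => im //.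
  have -> : i = m by apply/eqP; rewrite eqn_leq im mi.
  by rewrite subnn c1m c20.
split; [|split; [|split]].
- move=> i imk; rewrite /c; case: ifP => im; first exact: S1.
  by apply: S2; rewrite leq_subLR.
- by move=> x; rewrite /c leq0n c10.
- by move=> x; rewrite Ec ?leq_addr // addKn c2k.
move=> i imk; case: (leqP m i) => mi.
  have ik : (i - m < k)%N by rewrite ltn_subLR.
  have [I21 [x [x1 x2]]] := I2 _ ik.
  split; first by move=> y; rewrite Ec // Ec ?(leq_trans mi) // subSn // => /I21.
  by exists x; rewrite Ec ?(leq_trans mi) // Ec // subSn.
by rewrite /c (ltnW mi) mi; exact: I1.
Qed.

Lemma strict_chain_grow X Z Z' k c :
  strict_chain X Z k c -> is_submodule Z' -> (forall x, Z x -> Z' x) ->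
  exists k' c', [/\ strict_chain X Z' k' c', (k <= k')%N
                  & (exists x, Z' x /\ ~ Z x) -> k' = k.+1].
Proof.
move=> ch SZ' ZZ'; have [grows|same] := classic (exists x, Z' x /\ ~ Z x).
  exists k.+1, (fun i => if (i <= k)%N then c i else Z').
  by split => //; exact: strict_chain_snoc ch SZ' ZZ' grows.
exists k, c; split => //; apply: strict_chain_eq ch => // x.
split=> [/ZZ' //|Z'x]; apply: NNPP => nZx; apply: same; by exists x.
Qed.

(* The modular law: if Y' <= Y have the same intersection with B and the same
   sum with B, then Y' = Y. *)
Lemma cap_or_sum_grows B Y Y' :
  is_submodule B -> is_submodule Y' -> is_submodule Y -> (forall x, Y' x -> Y x) ->
  (exists x, Y x /\ ~ Y' x) ->
  (exists x, (B x /\ Y x) /\ ~ (B x /\ Y' x)) \/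
  (exists x, submodule_sum B Y x /\ ~ submodule_sum B Y' x).
Proof.
move=> SB SY' SY Y'Y [x [Yx nY'x]]; apply: NNPP => /not_or_and [ncap nsum].
apply: nsum; exists x; split; first by exists 0, x; rewrite add0r; split => //; exact: SB.1.
move=> [u [v [Bu Y'v ex]]]; have eu : u = x - v by rewrite ex addrK.
apply: ncap; exists u; split.
  by split => //; rewrite eu; apply: submoduleB => //; apply: Y'Y.
by move=> [_ Y'u]; apply: nY'x; rewrite ex; apply: submoduleD.
Qed.

(* Intersecting with B and adding B splits a chain from A to c N into chains
   from A to B /\ c N and from B to B + c N; by the modular law every strict
   step survives in one of them. *)
Lemma strict_chain_split A B Y N c : is_submodule B -> (forall x, A x -> B x) ->
  strict_chain A Y N c ->
  exists N1 N2 c1 c2, [/\ strict_chain A (fun x => B x /\ c N x) N1 c1,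
    strict_chain B (submodule_sum B (c N)) N2 c2 & (N <= N1 + N2)%N].
Proof.
move=> SB AB; elim: N Y c => [|N IH] Y c ch; have [cS [c0 _]] := ch.
  exists 0%N, 0%N, (fun=> c 0%N), (fun=> B); split => //.
    apply: strict_chain_nil (cS 0%N isT) _ _ => x; first exact: c0.
    by split=> [cx|[]//]; split => //; apply/AB/c0.
  apply: (strict_chain_nil SB) => // x; split=> [Bx|[u [v [Bu /c0 /AB Bv ->]]]].
    by exists x, 0; split => //; [exact: (cS 0%N isT).1 | rewrite addr0].
  exact: submoduleD SB Bu Bv.
have [N1 [N2 [c1 [c2 [ch1 ch2 le]]]]] := IH _ _ (strict_chain_truncate ch).
have [cN_sub grows] := ch.2.2.2 N (ltnSn N).
have [SN SN1] := (cS N (leqnSn N), cS N.+1 (leqnn _)).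
have cap_sub x : B x /\ c N x -> B x /\ c N.+1 x by case=> Bx /cN_sub.
have sum_sub x : submodule_sum B (c N) x -> submodule_sum B (c N.+1) x.
  by case=> u [v [Bu /cN_sub cv ex]]; exists u, v.
have [k1 [c1' [ch1' le1 gr1]]] := strict_chain_grow ch1 (is_submodule_cap SB SN1) cap_sub.
have [k2 [c2' [ch2' le2 gr2]]] := strict_chain_grow ch2 (is_submodule_sum SB SN1) sum_sub.
exists k1, k2, c1', c2'; split => //.
have [/gr1 ->|/gr2 ->] := cap_or_sum_grows SB SN SN1 cN_sub grows.
  by rewrite addSn ltnS (leq_trans le) // leq_add2l.
by rewrite addnS ltnS (leq_trans le) // leq_add2r.
Qed.

Lemma quot_length_add A B C m k :
  is_submodule B -> (forall x, A x -> B x) -> (forall x, B x -> C x) ->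
  quot_length A B m -> quot_length B C k -> quot_length A C (m + k).
Proof.
move=> SB AB BC [[c1 ch1] ub1] [[c2 ch2] ub2]; split.
  by eexists; exact: strict_chain_cat ch1 ch2.
move=> N c ch; have [cS [_ [cN _]]] := ch.
have [N1 [N2 [c1' [c2' [ch1' ch2' le]]]]] := strict_chain_split SB AB ch.
apply: leq_trans le (leq_add (ub1 _ _ _) (ub2 _ _ _)).
  apply: strict_chain_eq ch1' => // x.
  by split=> [[]//|Bx]; split => //; apply/cN/BC.
apply: strict_chain_eq ch2' => // x; split=> [[u [v [Bu cv ->]]]|/cN cx].
  by apply/cN; apply: (submoduleD (cS N (leqnn N))) cv; apply/cN/BC.
by exists 0, x; split => //; [exact: SB.1 | rewrite add0r].
Qed.

Lemma quot_length0 B : is_submodule B -> quot_length B B 0.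
Proof.
move=> SB; split; first by exists (fun=> B); apply: strict_chain_nil.
move=> [|k] c ch //; exfalso; have [_ [c0 [ck cI]]] := ch.
have [_ [x [x1 x2]]] := cI 0%N (ltn0Sn k); apply/x2/c0/ck.
by apply: (strict_chain_le ch) x1; rewrite ltn0Sn leqnn.
Qed.

End Length.

Section Transport.
Variables (S : comNzRingType) (V W : lmodType S) (phi : V -> W) (B Z : V -> Prop).
Hypotheses (phi_lin : forall r x y, phi (r *: x + y) = r *: phi x + phi y)
  (SB : is_submodule B) (SZ : is_submodule Z) (BZ : forall x, B x -> Z x)
  (phi_onto : forall w, exists z, Z z /\ phi z = w)
  (phi_ker : forall z, Z z -> (B z <-> phi z = 0)).

Let phi0 : phi 0 = 0.
Proof.
apply: (addrI (phi 0)); rewrite addr0 -{1}[phi 0]scale1r -phi_lin.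
by rewrite scale1r addr0.
Qed.

Let phiB x y : phi (x - y) = phi x - phi y.
Proof. by have := phi_lin (-1) y x; rewrite !scaleN1r addrC => ->; rewrite addrC. Qed.

Lemma strict_chain_preimage n c :
  strict_chain (fun w : W => w = 0) (fun=> True) n c ->
  strict_chain B Z n (fun i z => Z z /\ c i (phi z)).
Proof.
move=> [cS [c0 [cn cI]]]; split; [|split; [|split]].
- move=> i ik; have [ci0 ciS] := cS i ik; split; first by split; [exact: SZ.1 | rewrite phi0].
  move=> r x y [Zx cx] [Zy cy]; split; first exact: SZ.2.
  by rewrite phi_lin; apply: ciS.
- move=> x; split=> [[Zx /c0 /(phi_ker Zx)] //|Bx].
  by have Zx := BZ Bx; split => //; apply/c0/(phi_ker Zx).
- by move=> x; split=> [[]//|Zx]; split => //; apply/cn.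
move=> i ik; have [ci_sub [w [w1 w2]]] := cI i ik; split.
  by move=> x [Zx cx]; split => //; apply: ci_sub.
have [z [Zz ezw]] := phi_onto w; rewrite -ezw in w1 w2.
by exists z; split => // [[_ /w2]].
Qed.

Lemma strict_chain_image n c : strict_chain B Z n c ->
  strict_chain (fun w : W => w = 0) (fun=> True) n (fun i w => exists z, c i z /\ phi z = w).
Proof.
move=> ch; have [cS [c0 [cn cI]]] := ch.
have cZ i x : (i <= n)%N -> c i x -> Z x.
  by move=> ik cx; apply/cn; apply: (strict_chain_le ch) cx; rewrite ik leqnn.
split; [|split; [|split]].
- move=> i ik; have [ci0 ciS] := cS i ik; split; first by exists 0.
  move=> r _ _ [x [cx <-]] [y [cy <-]].
  by exists (r *: x + y); split; [apply: ciS | rewrite phi_lin].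
- move=> w; split=> [[z [/c0 Bz <-]]|->]; first exact/(phi_ker (BZ Bz)).
  by exists 0; split => //; apply/c0; exact: SB.1.
- move=> w; split => // _; have [z [Zz <-]] := phi_onto w.
  by exists z; split => //; apply/cn.
move=> i ik; have [ci_sub [x [x1 x2]]] := cI i ik; split.
  by move=> w [z [cz <-]]; exists z; split => //; apply: ci_sub.
exists (phi x); split; first by exists x.
move=> [z [cz ezx]]; apply: x2.
have Bxz : B (x - z).
  apply/phi_ker; last by rewrite phiB ezx subrr.
  by apply: submoduleB SZ (cZ _ _ ik x1) (cZ _ _ (ltnW ik) cz).
rewrite -(subrK z x); apply: submoduleD (cS i (ltnW ik)) _ cz.
move: Bxz => /c0; apply: (strict_chain_le ch).
by rewrite leq0n (ltnW ik).
Qed.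

Lemma quot_length_transport n :
  quot_length (fun w : W => w = 0) (fun=> True) n -> quot_length B Z n.
Proof.
move=> [[c ch] ub]; split; first by eexists; exact: strict_chain_preimage ch.
by move=> k c' ch'; apply: ub; exact: strict_chain_image ch'.
Qed.

End Transport.

Lemma quot_length_ffun (S : comNzRingType) (L : lmodType S) (K : finType) l :
  module_length L l ->
  quot_length (fun f : {ffun K -> L} => f = 0) (fun=> True) (#|K| * l).
Proof.
move=> HL.
pose P j (f : {ffun K -> L}) := forall x : K, (j <= enum_rank x)%N -> f x = 0.
have SP j : is_submodule (P j).
  split=> [x _|r f g Pf Pg x jx]; first by rewrite ffunE.
  by rewrite !ffunE Pf // Pg // scaler0 addr0.
have PS j f : P j f -> P j.+1 f by move=> Pf x jx; apply: Pf; exact: ltnW.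
have step j : (j < #|K|)%N -> quot_length (P j) (P j.+1) l.
  move=> jK; pose xj := enum_val (Ordinal jK).
  apply: (@quot_length_transport _ _ _ (fun f : {ffun K -> L} => f xj) (P j) (P j.+1)
            _ (SP j) (SP j.+1) (PS j)) HL.
  - by move=> r f g; rewrite !ffunE.
  - move=> y; exists [ffun x => if x == xj then y else 0].
    split; last by rewrite ffunE eqxx.
    move=> x jx; rewrite ffunE; case: eqP => // ex.
    by move: jx; rewrite ex enum_valK /= ltnn.
  - move=> f Pf; split=> [Pjf|f0 x]; first by apply: Pjf; rewrite enum_valK.
    rewrite leq_eqVlt => /orP [/eqP ejx|]; last exact: Pf.
    by rewrite (_ : x = xj) // -[x]enum_rankK; congr enum_val; apply: val_inj.
have P0 f : P 0%N f <-> f = 0.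
  split=> [Pf|-> x _]; last by rewrite ffunE.
  by apply/ffunP => x; rewrite ffunE; apply: Pf.
have PK f : P #|K| f by move=> x; rewrite leqNgt ltn_ord.
suff len j : (j <= #|K|)%N -> quot_length (P 0%N) (P j) (j * l).
  have [[c ch] ub] := len _ (leqnn _); split.
    by exists c; apply: strict_chain_eq ch.
  by move=> k c' ch'; apply: ub; apply: strict_chain_eq ch' => // f; rewrite P0.
elim: j => [_|j IH jK]; first exact: quot_length0.
rewrite mulSnr; apply: quot_length_add (IH (ltnW jK)) (step _ jK).
- exact: SP.
- by move=> f Pf x _; apply: Pf.
- exact: PS.
Qed.

Definition sorted_tuple (d n : nat) := {t : n.-tuple 'I_d | sorted <=%O t}.

Section Tor.
Variables (S : comNzRingType) (d n : nat) (a : 'I_d -> S) (L : lmodType S).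

Local Notation tuple := (n.-tuple 'I_d).
Local Notation g := (@pow_gens S d n a).

Definition msort (t : tuple) : sorted_tuple d n :=
  exist _ (sort_tuple <=%O t) (sort_le_sorted t).

Lemma msortK (m : sorted_tuple d n) : msort (val m) = m.
Proof. by apply/val_inj/val_inj; rewrite /= sort_le_id // (valP m). Qed.

Lemma msort_eq (t : tuple) (m : sorted_tuple d n) : (msort t == m) = perm_eq t (val m).
Proof.
rewrite -(inj_eq val_inj) -(inj_eq val_inj) /= -{1}(sort_le_id (valP m)).
exact: (sameP eqP (perm_sort_leP _ _)).
Qed.

Lemma pow_gens_msort t : g (val (msort t)) = g t.
Proof. by apply: perm_big; rewrite perm_sort. Qed.

Definition collect (f : {ffun tuple -> L}) : {ffun sorted_tuple d n -> L} :=
  [ffun m => \sum_(t | msort t == m) f t].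

Lemma collect_lin r f f' : collect (r *: f + f') = r *: collect f + collect f'.
Proof.
apply/ffunP => m; rewrite !ffunE scaler_sumr -big_split /=.
by apply: eq_bigr => t _; rewrite !ffunE.
Qed.

Lemma collect_onto w : exists f, collect f = w.
Proof.
exists [ffun t => if val (msort t) == t then w (msort t) else 0]; apply/ffunP => m.
rewrite ffunE (bigD1 (val m)) ?msortK // ffunE msortK eqxx /= big1 ?addr0 //.
move=> t /andP [/eqP st nt]; rewrite ffunE; case: eqP => // e.
by move: nt; rewrite -st /= e eqxx.
Qed.

Lemma is_submodule_tor1_boundaries : is_submodule (tor1_boundaries g (L := L)).
Proof.
split; first by exists [::]; split => //; rewrite big_nil.
move=> r x y [s1 [H1 ->]] [s2 [H2 ->]].
exists (map (fun p => (p.1, r *: p.2)) s1 ++ s2); split.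
  move=> p /(List.in_app_or _ _ p) [/List.in_map_iff [q [<- /H1]] //|/H2 //].
rewrite big_cat big_map scaler_sumr; congr (_ + _); apply: eq_bigr => p _.
by apply/ffunP => i; rewrite !ffunE scalerA mulrC -scalerA.
Qed.

Hypothesis ann : annihilates (ideal_of (fun=> True) a) L.

Lemma tor1_cycles_all (f : {ffun tuple -> L}) : (0 < n)%N -> tor1_cycles g f.
Proof.
move=> n_gt0; rewrite /tor1_cycles big1 // => -[[|j w] sw _].
  by rewrite -(eqP sw) in n_gt0.
by apply: ann; rewrite /pow_gens /= big_cons mulrC; apply/ideal_ofMl/ideal_of_gen.
Qed.

Hypothesis qr : quasi_regular a d.

Lemma syzygy_class_sum (k : tuple -> S) (m : sorted_tuple d n) : syzygy g k ->
  ideal_of (fun=> True) a (\sum_(t | msort t == m) k t).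
Proof.
move=> syz; pose p := [seq (k t, val t) | t <- index_enum {: tuple}].
have hp : homogeneous n d p.
  by move=> q /mapP [t _ ->]; rewrite /= size_tuple; split => //; apply/allP.
have ep : eval_form a p = 0 by rewrite /eval_form big_map -[RHS]syz.
have := qr hp ep (val m); rewrite /form_coef big_map.
under eq_bigl do rewrite /= -msort_eq.
by apply: ideal_of_sub.
Qed.

Lemma collect_boundary (k : tuple -> S) y : syzygy g k ->
  collect [ffun t => k t *: y] = 0.
Proof.
move=> syz; apply/ffunP => m; rewrite !ffunE.
under eq_bigr do rewrite ffunE.
by rewrite -scaler_suml; apply: ann; apply: syzygy_class_sum.
Qed.

Lemma collect_tor1_boundaries f : tor1_boundaries g f -> collect f = 0.
Proof.
move=> [s [Hs ->]]; elim: s Hs => [|p s IH] Hs.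
  by apply/ffunP => m; rewrite big_nil !ffunE big1 // => t _; rewrite ffunE.
have := collect_lin 1 [ffun t => p.1 t *: p.2] (\sum_(q <- s) [ffun t => q.1 t *: q.2]).
rewrite !scale1r big_cons => ->; rewrite collect_boundary ?add0r; last exact: Hs (or_introl _).
by apply: IH => q sq; apply: Hs; right.
Qed.

(* f is the sum of the boundaries built from the syzygies e_t - e_(msort t). *)
Lemma tor1_boundaries_collect0 f : collect f = 0 -> tor1_boundaries g f.
Proof.
move=> cf0; pose e (t u : tuple) : S := (u == t)%:R - (u == val (msort t))%:R.
exists [seq (e t, f t) | t <- index_enum {: tuple}]; split.
  move=> _ /List.in_map_iff [t [<- _]]; rewrite /syzygy /e.
  under eq_bigr do rewrite mulrBl.
  by rewrite sumrB !sum_delta pow_gens_msort subrr.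
apply/ffunP => u; rewrite sum_ffunE big_map.
under eq_bigr do rewrite ffunE /= scalerBl.
rewrite sumrB.
have -> : \sum_t (u == t)%:R *: f t = f u.
  rewrite (bigD1 u) //= eqxx scale1r big1 ?addr0 // => t /negPf.
  by rewrite eq_sym => ->; rewrite scale0r.
suff -> : \sum_t (u == val (msort t))%:R *: f t = 0 by rewrite subr0.
have [su|nsu] := boolP (sorted <=%O u); last first.
  rewrite big1 // => t _; case: eqP => [eu|_]; last by rewrite scale0r.
  by move: nsu; rewrite eu (valP (msort t)).
pose m : sorted_tuple d n := exist _ u su.
move/ffunP/(_ m): cf0; rewrite !ffunE => e0; rewrite -[RHS]e0 [RHS]big_mkcond.
apply: eq_bigr => t _.
have -> : (msort t == m) = (u == val (msort t)) by rewrite -(inj_eq val_inj) eq_sym.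
by case: eqP; rewrite ?scale1r ?scale0r.
Qed.

Lemma tor1_length_pow_gens l : (0 < n)%N -> module_length L l ->
  tor1_length g L (#|{: sorted_tuple d n}| * l).
Proof.
move=> n_gt0 HL.
apply: (@quot_length_transport _ _ _ collect) (quot_length_ffun _ HL).
- exact: collect_lin.
- exact: is_submodule_tor1_boundaries.
- by split=> *; apply: tor1_cycles_all.
- by move=> *; apply: tor1_cycles_all.
- by move=> w; have [f <-] := collect_onto w; exists f; split => //; apply: tor1_cycles_all.
- by move=> f _; split; [apply: collect_tor1_boundaries | apply: tor1_boundaries_collect0].
Qed.

End Tor.

Lemma card_sorted_tuple d n : (0 < n)%N ->
  #|{: sorted_tuple d n}| = binomZ (n + d - 1) (d%:Z - 1).
Proof.
move=> n_gt0; rewrite card_sig; case: d => [|d].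
  apply: eq_card0 => -[s sw]; case: s sw => [|x w] sw; first by rewrite -(eqP sw) in n_gt0.
  by have := ltn_ord x.
rewrite addnS subn1 /= subn1 /=.
have -> : #|[pred t : n.-tuple 'I_d.+1 | sorted <=%O t]| =
          #|[set t : n.-tuple 'I_d.+1 | sorted leq (map val t)]|.
  by apply: eq_card => t; rewrite inE /= sorted_map.
by rewrite card_sorted_tuples -[n in 'C(_, n)](addnK d n) bin_sub // leq_addl.
Qed.

Theorem mainTheorem3 (S : comNzRingType) (d : nat) (a : 'I_d -> S)
  (L : lmodType S) (l : nat) :
  local_ring S ->
  regular_sequence a ->
  module_length L l ->
  annihilates (ideal_of (fun _ => True) a) L ->
  forall n : nat, (1 <= n)%N ->
    tor1_length (@pow_gens S d n a) L (binomZ (n + d - 1) (d%:Z - 1) * l)%N.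
Proof.
move=> _ [nzd _] HL ann n n_gt0.
rewrite -card_sorted_tuple //; apply: tor1_length_pow_gens => //.
exact: regular_quasi_regular.
Qed.
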